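(* Let $T=1$ and let $\mathcal I$ be a random variable with $\mathbb P(\mathcal I=1)=\mathbb P(\mathcal I=2)=\tfrac12$. Let $\mathcal F_t=\mathcal F^1_t$ be the $\sigma$-algebra generated by $\mathcal I$ and the $\mathbb P$-null sets for all $t\in[0,1]$, and let $\mathcal F^2_t$ be the trivial $\sigma$-algebra augmented by $\mathbb P$-null sets for all $t\in[0,1]$. Consider the payoff $$\mathcal P(\tau,\sigma)=f_\tau1_{\{\tau<\sigma\}}+g_\sigma1_{\{\sigma<\tau\}}+h_\tau1_{\{\tau=\sigma\}}$$ with $f_t\equiv1$, $g_t=\tfrac12t$, $h_t=1$ for $t<1$, and $h_1=2$ on $\{\mathcal I=1\}$, $h_1=0$ on $\{\mathcal I=2\}$, and let $N(\tau,\sigma)=\mathbb E[\mathcal P(\tau,\sigma)]$. Then $$\sup_{\sigma\in\mathcal T^R(\mathcal F^2_t)}\inf_{\tau\in\mathcal T^R(\mathcal F^1_t)}N(\tau,\sigma)\le\tfrac12<\inf_{\tau\in\mathcal T^R(\mathcal F^1_t)}\sup_{\sigma\in\mathcal T^R(\mathcal F^2_t)}N(\tau,\sigma),$$ so the game has no value in randomised strategies.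
   Context: For a filtration $(\mathcal G_t)_{t\in[0,1]}\subseteq(\mathcal F_t)$ on a complete probability space supporting independent uniform random variables independent of $\mathcal F_1$, $\mathcal A^\circ(\mathcal G_t)$ is the set of $(\mathcal G_t)$-adapted processes $\rho$ with, for every $\omega$, $t\mapsto\rho_t(\omega)$ càdlàg, non-decreasing, $\rho_{0-}=0$, $\rho_1=1$. A $(\mathcal G_t)$-randomised stopping time is $\eta=\inf\{t\in[0,1]:\rho_t>Z\}$ with $\rho\in\mathcal A^\circ(\mathcal G_t)$ and $Z\sim U([0,1])$ independent of $\mathcal F_1$; $\mathcal T^R(\mathcal G_t)$ is the set of these, and the randomisation devices of $\tau$ and $\sigma$ are independent of each other and of $\mathcal F_1$. Here $\tau$ (chosen by the informed player, who knows $\mathcal I$) is the minimiser and $\sigma$ (chosen by the uninformed player) the maximiser. *)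

From HB Require Import structures.
From mathcomp Require Import all_boot all_order all_algebra.
From mathcomp Require Import all_classical all_reals all_analysis.
Set Implicit Arguments. Unset Strict Implicit. Unset Printing Implicit Defensive.
Import Order.TTheory GRing.Theory Num.Theory.
Import numFieldNormedType.Exports.
Local Open Scope classical_set_scope.
Local Open Scope ring_scope.

Section Defs.
Context {d : measure_display} {Omega : measurableType d} {R : realType}.
Variable P : probability Omega R.

Definition augmented (G : set (set Omega)) : set (set Omega) :=
  [set A | exists2 C, G C &
     P.-negligible ((A `\` C) `|` (C `\` A))].

Definition F1 (I : Omega -> R) : set (set Omega) :=
  augmented [set I @^-1` C | C in [set C : set R | measurable C]].

Definition F2 : set (set Omega) := augmented [set set0; setT].

(* rho in A°(G_t) for a time-constant filtration G_t = G, t in [0,1].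
   Processes are indexed by t : R, only t in [0,1] matters. *)
Definition in_A0 (G : set (set Omega)) (rho : R -> Omega -> R) : Prop :=
  (forall t, 0 <= t <= 1 -> forall B : set R, measurable B ->
      G (rho t @^-1` B)) /\
  (forall w,
    (forall t : R, 0 <= t < 1 -> (rho x w : R) @[x --> t^'+] --> (rho t w : R)) /\
    (forall t : R, 0 < t <= 1 -> cvg ((rho x w : R) @[x --> t^'-])) /\
    (* non-decreasing on [0,1], with rho_{0-} = 0 *)
    (forall s t, 0 <= s -> s <= t -> t <= 1 -> rho s w <= rho t w) /\
    0 <= rho 0 w /\
    rho 1 w = 1).

Definition rst (rho : R -> Omega -> R) (Z : Omega -> R) (w : Omega) : R :=
  inf [set t | 0 <= t <= 1 /\ Z w < rho t w].

Definition f_pay (t : R) (w : Omega) : R := 1.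
Definition g_pay (t : R) (w : Omega) : R := t / 2.
Definition h_pay (I : Omega -> R) (t : R) (w : Omega) : R :=
  if t < 1 then 1 else if I w == 1 then 2 else 0.

Definition payoff (I : Omega -> R) (tau sigma : R) (w : Omega) : R :=
  f_pay tau w * (if tau < sigma then 1 else 0)
  + g_pay sigma w * (if sigma < tau then 1 else 0)
  + h_pay I tau w * (if tau == sigma then 1 else 0).

Definition Ngame (I Z1 Z2 : Omega -> R) (rho xi : R -> Omega -> R) : \bar R :=
  (\int[P]_w (payoff I (rst rho Z1 w) (rst xi Z2 w) w)%:E)%E.

End Defs.

From HB Require Import structures.
From mathcomp Require Import all_boot all_order all_algebra.
From mathcomp Require Import all_classical all_reals all_analysis.
From mathcomp Require Import lra measurable_realfun.
Set Implicit Arguments. Unset Strict Implicit. Unset Printing Implicit Defensive.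
Import Order.TTheory GRing.Theory Num.Theory.
Import numFieldNormedType.Exports.
Local Open Scope classical_set_scope.
Local Open Scope ring_scope.

(* - sup inf <= 1/2: a strategy xi of the uninformed player is adapted to the
     augmented trivial filtration, so each xi_{s_k} is a.s. a constant c_k.
     Stopping at a time s close to 1 on {I = 1} and at 1 on {I = 2}, the
     informed player keeps the expected payoff below 1/2 + e
     (informed_reply_value, uninformed_strategy_exploitable).
   - inf sup >= 3/5 > 1/2: against a strategy rho of the informed player,
     either {tau < 1} has probability at most 2/5 and waiting until 1 earns
     at least 3/5 (reply_wait), or stopping at a deterministic time s_n >= 9/10
     does (reply_early, informed_strategy_exploitable). *)

Section measurability.
Context {d : measure_display} {Omega : measurableType d} {R : realType}.

Lemma preimage_measurable (Y : Omega -> R) (B : set R) :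
  measurable_fun setT Y -> measurable B -> measurable (Y @^-1` B).
Proof. by move=> mY mB; have := mY measurableT B mB; rewrite setTI. Qed.

Lemma measurable_cst_prop (p : Prop) : measurable [set _ : R | p].
Proof.
have [hp|hp] := pselect p; first by rewrite (_ : [set _ | p] = setT)//; apply/seteqP; split.
by rewrite (_ : [set _ | p] = set0)//; apply/seteqP; split.
Qed.

Lemma measurable_lt (f g : Omega -> R) : measurable_fun setT f ->
  measurable_fun setT g -> measurable [set w | f w < g w].
Proof.
move=> mf mg; have := measurable_fun_ltr mf mg measurableT (I : measurable [set true]).
by rewrite setTI.
Qed.

End measurability.

Section probability_facts.
Context {d : measure_display} {Omega : measurableType d} {R : realType}.
Variable P : probability Omega R.

(* The real-valued probability of a set, so that probability computations can
   be done with lra on real numbers. *)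
Definition pr (A : set Omega) : R := fine (P A).

Lemma prE A : measurable A -> P A = (pr A)%:E.
Proof. by move=> mA; rewrite /pr fineK// fin_num_measure. Qed.

Lemma pr_ge0 A : 0 <= pr A.
Proof. by rewrite /pr fine_ge0. Qed.

Lemma prC A : measurable A -> pr (~` A) = 1 - pr A.
Proof.
move=> mA; apply: EFin_inj; rewrite -prE; last exact: measurableC.
by rewrite probability_setC// prE.
Qed.

Lemma pr_le A B : measurable A -> measurable B -> A `<=` B -> pr A <= pr B.
Proof. by move=> mA mB AB; rewrite -lee_fin -!prE// le_measure ?inE. Qed.

Lemma pr_le_setI A B : measurable A -> measurable B ->
  pr A <= pr (A `&` B) + pr (~` B).
Proof.
move=> mA mB; have mAB := measurableI _ _ mA mB; have mBc := measurableC mB.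
apply: le_trans (_ : pr (A `&` B `|` ~` B) <= _).
  apply: pr_le => //; first exact: measurableU.
  by move=> w Aw; have [Bw|nBw] := pselect (B w); [left|right].
by rewrite -lee_fin EFinD -!prE//; [exact: measureU2 | exact: measurableU].
Qed.

Lemma pr_setI_as A G : measurable A -> measurable G -> pr G = 1 ->
  pr (A `&` G) = pr A.
Proof.
move=> mA mG G1; apply/le_anti/andP; split.
  by apply: pr_le (measurableI _ _ mA mG) mA _ => w [].
by have := pr_le_setI mA mG; rewrite prC// G1 subrr addr0.
Qed.

Lemma negligible_pr0 A : measurable A -> pr A = 0 -> P.-negligible A.
Proof. by move=> mA A0; apply/negligibleP => //; apply: etrans (prE mA) _; rewrite A0. Qed.

Lemma negligible_compl A : measurable A -> pr A = 1 -> P.-negligible (~` A).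
Proof.
by move=> mA A1; apply: negligible_pr0; [exact: measurableC | rewrite prC// A1 subrr].
Qed.

(* Monotonicity of the integral for arbitrary (not necessarily measurable)
   nonnegative functions: the integral of a nonnegative function is the
   supremum of the integrals of its simple minorants.  This matters since the
   payoff of a game played with adapted (but arbitrary) strategies is not known
   to be measurable. *)
Lemma integral_le (f g : Omega -> R) : (forall w, 0 <= f w) ->
  (forall w, f w <= g w) -> (\int[P]_w (f w)%:E <= \int[P]_w (g w)%:E)%E.
Proof.
move=> f0 fg; have g0 w : 0 <= g w := le_trans (f0 w) (fg w).
rewrite !ge0_integralTE ?lee_fin//.
apply: ereal_sup_le => _ [h /= hf <-]; exists h => //= x.
by apply: le_trans (hf x) _; rewrite lee_fin.
Qed.

Lemma indic_in (A : set Omega) w : A w -> \1_A w = 1 :> R.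
Proof. by move=> Aw; rewrite indicE mem_set. Qed.

Lemma indic_out (A : set Omega) w : ~ A w -> \1_A w = 0 :> R.
Proof. by move=> nAw; rewrite indicE memNset. Qed.

Definition comb2 (a b : R) (A B : set Omega) (w : Omega) : R :=
  a * \1_A w + b * \1_B w.

Lemma comb2_ge0 (a b : R) A B w : 0 <= a -> 0 <= b -> 0 <= comb2 a b A B w.
Proof. by move=> a0 b0; rewrite addr_ge0// mulr_ge0. Qed.

Lemma measurable_comb2 (a b : R) A B : measurable A -> measurable B ->
  measurable_fun setT (comb2 a b A B).
Proof.
by move=> mA mB; apply: measurable_funD; apply: measurable_funM => //;
  exact: measurable_indic.
Qed.

Lemma integral_scaled_indic (k : R) A : 0 <= k -> measurable A ->
  (\int[P]_w (k * \1_A w)%:E = (k * pr A)%:E)%E.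
Proof.
move=> k0 mA; under eq_integral do rewrite EFinM.
rewrite ge0_integralZl_EFin//; first by rewrite integral_indic// setIT EFinM -prE.
by apply: measurableT_comp => //; exact: measurable_indic.
Qed.

Lemma integral_comb2 (a b : R) A B : 0 <= a -> 0 <= b -> measurable A -> measurable B ->
  (\int[P]_w (comb2 a b A B w)%:E = (a * pr A + b * pr B)%:E)%E.
Proof.
move=> a0 b0 mA mB; under eq_integral do rewrite EFinD.
have mk (k : R) (X : set Omega) : measurable X -> measurable_fun setT (fun w => (k * \1_X w)%:E).
  by move=> mX; apply: measurableT_comp => //; apply: measurable_funM => //;
    exact: measurable_indic.
rewrite ge0_integralD//; try exact: mk; try by move=> w _; rewrite lee_fin mulr_ge0.
by rewrite !integral_scaled_indic.
Qed.

Lemma integral_ge_comb2 (f : Omega -> R) (a b : R) A B :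
  0 <= a -> 0 <= b -> measurable A -> measurable B ->
  (forall w, comb2 a b A B w <= f w) ->
  ((a * pr A + b * pr B)%:E <= \int[P]_w (f w)%:E)%E.
Proof.
move=> a0 b0 mA mB gf; rewrite -integral_comb2//.
by apply: integral_le => // w; exact: comb2_ge0.
Qed.

Lemma integral_le_comb2_ae (f : Omega -> R) (M a b : R) A B N :
  0 <= a -> 0 <= b -> 0 <= M -> measurable A -> measurable B ->
  P.-negligible N -> (forall w, 0 <= f w) -> (forall w, f w <= M) ->
  (forall w, ~ N w -> f w <= comb2 a b A B w) ->
  (\int[P]_w (f w)%:E <= (a * pr A + b * pr B)%:E)%E.
Proof.
move=> a0 b0 M0 mA mB [N' [mN' PN' NN']] f0 fM fg.
apply: le_trans (integral_le (g := fun w => comb2 a b A B w + M * \1_N' w) f0 _) _.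
  move=> w; have [N'w|nN'w] := pselect (N' w).
    by rewrite indicE mem_set// mulr1 -[f w]add0r lerD// comb2_ge0.
  by rewrite indicE memNset// mulr0 addr0; apply: fg => /NN'.
under eq_integral do rewrite EFinD.
rewrite ge0_integralD//; first last.
- by apply: measurableT_comp => //; apply: measurable_funM => //; exact: measurable_indic.
- by move=> w _; rewrite lee_fin mulr_ge0.
- by apply: measurableT_comp => //; exact: measurable_comb2.
- by move=> w _; rewrite lee_fin comb2_ge0.
by rewrite integral_comb2// integral_scaled_indic// /pr PN' mulr0 adde0.
Qed.

End probability_facts.

Section augmented_filtrations.
Context {d : measure_display} {Omega : measurableType d} {R : realType}.
Variable P : probability Omega R.

Lemma augmented_self (G : set (set Omega)) A : G A -> augmented P G A.
Proof.
by move=> GA; exists A => //; rewrite setDv setU0; exact: negligible_set0.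
Qed.

Lemma augmented_measurable (G : set (set Omega)) A :
  measure_is_complete P -> (forall C, G C -> measurable C) ->
  augmented P G A -> measurable A.
Proof.
move=> cP GM [C GC NAC]; have mC := GM _ GC.
have mAC : measurable (A `\` C) by apply: cP; apply: negligibleS NAC => ? ?; left.
have mCA : measurable (C `\` A) by apply: cP; apply: negligibleS NAC => ? ?; right.
suff -> : A = (C `\` (C `\` A)) `|` (A `\` C) by apply: measurableU => //; exact: measurableD.
apply/seteqP; split => w.
  by move=> Aw; have [Cw|nCw] := pselect (C w); [left; split => // -[]|right].
by case=> [[Cw /not_andP[//|/contrapT//]]|[]].
Qed.

Lemma A0_measurable (G : set (set Omega)) (rho : R -> Omega -> R) t :
  measure_is_complete P -> (forall C, G C -> measurable C) ->
  in_A0 (augmented P G) rho -> 0 <= t <= 1 -> measurable_fun setT (rho t).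
Proof.
move=> cP GM [adapted _] t01 _ B mB; rewrite setTI.
exact: augmented_measurable cP GM (adapted t t01 B mB).
Qed.

Lemma generators_F1_measurable (I : Omega -> R) C : measurable_fun setT I ->
  [set I @^-1` C | C in [set C : set R | measurable C]] C -> measurable C.
Proof. by move=> mI [C' mC' <-]; exact: preimage_measurable. Qed.

Lemma generators_F2_measurable C : [set set0; setT] C -> measurable (C : set Omega).
Proof. by case=> ->. Qed.

Lemma F2_pr01 A : measurable A -> F2 P A -> pr P A = 0 \/ pr P A = 1.
Proof.
move=> mA [C [->|->] NAC].
  by left; rewrite setD0 set0D setU0 in NAC; rewrite /pr (measure_negligible mA NAC).
right; rewrite setDT setTD set0U in NAC.
have : pr P (~` A) = 0 by rewrite /pr (measure_negligible (measurableC mA) NAC).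
by rewrite prC// => /eqP; rewrite subr_eq0 => /eqP.
Qed.

Section F2_constant.
(* A [0,1]-valued random variable measurable for the augmented trivial
   sigma-algebra is almost surely constant, the constant being the smallest
   level below which it lies almost surely. *)
Variable Y : Omega -> R.
Hypotheses (mY : measurable_fun setT Y)
  (F2Y : forall B : set R, measurable B -> F2 P (Y @^-1` B))
  (Y01 : forall w, 0 <= Y w <= 1).

Let mpre (B : set R) : measurable B -> measurable (Y @^-1` B).
Proof. exact: preimage_measurable. Qed.

Let levels := [set r : R | pr P (Y @^-1` `]-oo, r]%classic) = 1].
Let level := inf levels.

Let levels1 : levels 1.
Proof.
rewrite /levels /= (_ : _ @^-1` _ = setT) ?/pr ?probability_setT//.
by apply/seteqP; split => w //= _; rewrite in_itv /=; case/andP: (Y01 w).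
Qed.

Let levels_ge0 r : levels r -> 0 <= r.
Proof.
rewrite /levels /= leNgt => h; apply/negP => r0; move: h.
rewrite (_ : _ @^-1` _ = set0) ?/pr ?measure0; first by move=> /eqP; rewrite eq_sym oner_eq0.
apply/seteqP; split => w //=; rewrite in_itv /= => Yr.
by case/andP: (Y01 w) => Y0 _; move: (le_trans Y0 Yr); rewrite leNgt r0.
Qed.

Let level01 : 0 <= level <= 1.
Proof.
by rewrite (ge_inf _ levels1) ?andbT; [apply: lb_le_inf => //; exists 1 | exists 0].
Qed.

Let below_level_negligible : P.-negligible [set w | Y w < level].
Proof.
pose Nk k := Y @^-1` `]-oo, level - k.+1%:R^-1]%classic.
have NkN k : P.-negligible (Nk k).
  apply: negligible_pr0; first exact: mpre.
  have [//|Nk1] := @F2_pr01 (Nk k) (mpre (measurable_itv _)) (F2Y (measurable_itv _)).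
  have : level <= level - k.+1%:R^-1 by apply: ge_inf => //; exists 0.
  by rewrite lerDl oppr_ge0 invr_le0 lern0.
apply: negligibleS (negligible_bigcup NkN) => w /= /ltr_add_invr[k hk]; exists k => //=.
by rewrite /Nk /= in_itv /= lerBrDr ltW.
Qed.

Let above_level_negligible : P.-negligible [set w | level < Y w].
Proof.
pose Nk k := Y @^-1` `]level + k.+1%:R^-1, +oo[%classic.
have NkN k : P.-negligible (Nk k).
  apply: negligible_pr0; first exact: mpre.
  have [r levr rlt] : exists2 r, levels r & r < level + k.+1%:R^-1.
    by apply: inf_lt; [exists 1 | rewrite ltrDl invr_gt0 ltr0n].
  have : pr P (Nk k) <= pr P (~` (Y @^-1` `]-oo, r]%classic)).
    apply: pr_le; [exact: mpre | exact/measurableC/mpre | move=> w].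
    by rewrite /Nk /= !in_itv /= andbT => lY; rewrite leNgt (lt_trans rlt lY).
  by rewrite prC ?levr ?subrr; [move=> h; apply/le_anti; rewrite h pr_ge0 | exact: mpre].
apply: negligibleS (negligible_bigcup NkN) => w /= /ltr_add_invr[k hk]; exists k => //=.
by rewrite /Nk /= in_itv /= hk.
Qed.

Lemma F2_as_constant :
  exists2 c : R, 0 <= c <= 1 & P.-negligible [set w | Y w != c].
Proof.
exists level => //; apply: negligibleS (negligibleU below_level_negligible above_level_negligible).
by move=> w /= /eqP; case: ltgtP => // Yl _; [left|right].
Qed.

End F2_constant.

End augmented_filtrations.

Section real_sequences.
Context {R : realType}.

Definition sn (n : nat) : R := 1 - n.+1%:R^-1.

Lemma sn_ge0 n : 0 <= sn n.
Proof. by rewrite /sn subr_ge0 invf_le1// ler1n. Qed.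

Lemma sn_lt1 n : sn n < 1.
Proof. by rewrite /sn ltrBlDr ltrDl invr_gt0 ltr0n. Qed.

Lemma sn01 n : 0 <= sn n <= 1.
Proof. by rewrite sn_ge0 ltW// sn_lt1. Qed.

Lemma sn_le m n : (m <= n)%N -> sn m <= sn n.
Proof. by move=> mn; rewrite /sn lerB// lef_pV2 ?posrE ?ltr0n// ler_nat ltnS. Qed.

Lemma sn_ltS n : sn n < sn n.+1.
Proof. by rewrite /sn ltrD2l ltrN2 ltf_pV2 ?posrE ?ltr0n// ltr_nat. Qed.

Lemma sn_S_gt0 n : 0 < sn n.+1.
Proof. by rewrite /sn subr_gt0 invf_lt1 ?ltr0n// ltr1n. Qed.

Lemma sn_ge9 n : (9 <= n)%N -> 9 / 10 <= sn n.
Proof. by move=> n9; apply: le_trans (sn_le n9); rewrite /sn; lra. Qed.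

Lemma sn_exceeds t : t < 1 -> exists n, t < sn n.
Proof. by move=> /ltr_add_invr[k hk]; exists k; rewrite /sn ltrBrDr. Qed.

Lemma has_sup_range01 (c : nat -> R) : (forall k, 0 <= c k <= 1) -> has_sup (range c).
Proof.
by move=> c01; split; [exists (c 0%N), 0%N | exists 1 => _ [k _ <-]; case/andP: (c01 k)].
Qed.

End real_sequences.

Section randomised_stopping_times.
Context {d : measure_display} {Omega : measurableType d} {R : realType}.
Implicit Types (rho : R -> Omega -> R) (Z : Omega -> R).

Lemma A0_at1 G rho w : in_A0 G rho -> rho 1 w = 1.
Proof. by case=> _ /(_ w)[_ [_ [_ []]]]. Qed.

Lemma A0_mono G rho w (s t : R) : in_A0 G rho -> 0 <= s -> s <= t -> t <= 1 ->
  rho s w <= rho t w.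
Proof. by case=> _ /(_ w)[_ [_ [+ _]]]; apply. Qed.

Lemma A0_range G rho w (t : R) : in_A0 G rho -> 0 <= t <= 1 -> 0 <= rho t w <= 1.
Proof.
move=> A0rho /andP[t0 t1]; have [_ /(_ w)[_ [_ [_ [rho0 _]]]]] := A0rho.
have := A0_mono w A0rho t0 t1 (lexx 1); rewrite (A0_at1 w A0rho) => ->.
by rewrite (le_trans rho0 (A0_mono w A0rho (lexx 0) t0 t1)).
Qed.

(* The randomised stopping time inf {t in [0,1] : rho_t > Z} lies in [0,1]
   (inf of the empty set being 0). *)
Lemma rst_ge0 rho Z w : 0 <= rst rho Z w.
Proof.
rewrite /rst; set S := [set t | _]; have [->|/set0P[t St]] := eqVneq S set0.
  by rewrite inf0.
by apply: lb_le_inf; [exists t | move=> y [/andP[]]].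
Qed.

Lemma rst_le rho Z w t : 0 <= t <= 1 -> Z w < rho t w -> rst rho Z w <= t.
Proof. by move=> t01 Zt; apply: ge_inf; [exists 0 => y [/andP[]] | split]. Qed.

Lemma rst_le1 rho Z w : rst rho Z w <= 1.
Proof.
rewrite /rst; set S := [set t | _]; have [->|/set0P[t [t01 Zt]]] := eqVneq S set0.
  by rewrite inf0.
by apply: le_trans (rst_le t01 Zt) _; case/andP: t01.
Qed.

Lemma rst_eq rho Z w t : 0 <= t <= 1 -> Z w < rho t w ->
  (forall s, 0 <= s <= 1 -> Z w < rho s w -> t <= s) -> rst rho Z w = t.
Proof.
move=> t01 Zt tmin; apply/le_anti/andP; split; first exact: rst_le.
by apply: lb_le_inf; [exists t | move=> s [] /tmin].
Qed.

Lemma rst_eq1 G rho Z w : in_A0 G rho -> Z w < 1 ->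
  (forall n, rho (sn n) w <= Z w) -> rst rho Z w = 1.
Proof.
move=> A0rho Z1 below; apply: rst_eq; first by rewrite ler01 lexx.
  by rewrite (A0_at1 w A0rho).
move=> s /andP[s0 s1] Zs; rewrite leNgt; apply/negP => /sn_exceeds[n sn_s].
have := le_trans (A0_mono w A0rho s0 (ltW sn_s) (ltW (sn_lt1 n))) (below n).
by rewrite leNgt Zs.
Qed.

(* The pure strategy "stop at time a": rho_t = 1_{t >= a}. *)
Definition step (a t : R) : R := if t < a then 0 else 1.

Lemma step_mono a s t : s <= t -> step a s <= step a t.
Proof. by rewrite /step => st; case: (ltP s a) => sa; case: (ltP t a) => ta; lra. Qed.

Lemma A0_step (G : set (set Omega)) (a : Omega -> R) :
  (forall t, 0 <= t <= 1 -> forall B : set R, measurable B ->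
      G ((fun w => step (a w) t) @^-1` B)) ->
  (forall w, 0 < a w <= 1) -> in_A0 G (fun t w => step (a w) t).
Proof.
move=> adapted a01; split => // w; have /andP[] := a01 w; move: (a w) => b b0 b1.
split; [|split; [|split; [|split]]].
- move=> t _; apply: cvg_near_cst; have [tb|bt] := ltP t b.
    near=> x; have xb : x < b by near: x; exact: nbhs_right_lt.
    by rewrite /step tb xb.
  near=> x; have tx : t < x by near: x; exact: nbhs_right_gt.
  by rewrite /step !ltNge bt (ltW (le_lt_trans bt tx)).
- move=> t _; have [tb|bt] := leP t b.
    apply: (is_cvg_near_cst (0 : R)); near=> x.
    have xt : x < t by near: x; exact: nbhs_left_lt.
    by rewrite /step (lt_le_trans xt tb).
  apply: (is_cvg_near_cst (1 : R)); near=> x.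
  have bx : b < x by near: x; exact: nbhs_left_gt.
  by rewrite /step ltNge (ltW bx).
- by move=> s t _ st _; exact: step_mono.
- by rewrite /step; case: ifP.
- by rewrite /step ltNge b1.
Unshelve. all: by end_near.
Qed.

Lemma rst_step (a : Omega -> R) Z w : 0 < a w <= 1 -> 0 <= Z w < 1 ->
  rst (fun t w => step (a w) t) Z w = a w.
Proof.
move=> /andP[a0 a1] /andP[Z0 Z1]; apply: rst_eq; first by rewrite (ltW a0) a1.
  by rewrite /step ltxx.
by move=> s _; rewrite /step; case: (ltP s (a w)) => // _; rewrite ltNge Z0.
Qed.

End randomised_stopping_times.

Section payoff_values.
Context {d : measure_display} {Omega : measurableType d} {R : realType}.
Variable I : Omega -> R.
Implicit Types (tau sigma t : R) (w : Omega).

Lemma payoff_lt tau sigma w : tau < sigma -> payoff I tau sigma w = 1.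
Proof.
move=> ts; rewrite /payoff /f_pay ts ltNge (ltW ts) (lt_eqF ts) /=.
by rewrite !mulr0 !addr0 mulr1.
Qed.

Lemma payoff_gt tau sigma w : sigma < tau -> payoff I tau sigma w = sigma / 2.
Proof.
move=> st; rewrite /payoff /g_pay st ltNge (ltW st) (gt_eqF st) /=.
by rewrite !mulr0 add0r addr0 mulr1.
Qed.

Lemma payoff_diag t w : payoff I t t w = h_pay I t w.
Proof. by rewrite /payoff ltxx eqxx !mulr0 !add0r mulr1. Qed.

Lemma payoff_first tau sigma w : tau < 1 -> tau <= sigma -> payoff I tau sigma w = 1.
Proof.
rewrite le_eqVlt => t1 /predU1P[<-|]; last exact: payoff_lt.
by rewrite payoff_diag /h_pay t1.
Qed.

Lemma payoff_ge0 tau sigma w : 0 <= sigma -> 0 <= payoff I tau sigma w.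
Proof.
move=> s0; case: (ltgtP tau sigma) => [ts|st|<-].
- by rewrite payoff_lt.
- by rewrite payoff_gt// divr_ge0.
- by rewrite payoff_diag /h_pay; case: ifP => // _; case: ifP.
Qed.

Lemma payoff_le2 tau sigma w : sigma <= 1 -> payoff I tau sigma w <= 2.
Proof.
move=> s1; case: (ltgtP tau sigma) => [ts|st|<-].
- by rewrite payoff_lt// ler1n.
- by rewrite payoff_gt//; lra.
- by rewrite payoff_diag /h_pay; case: ifP => _; [rewrite ler1n|case: ifP].
Qed.

End payoff_values.

Section uniform_thresholds.
Context {d : measure_display} {Omega : measurableType d} {R : realType}.
Variables (P : probability Omega R) (Z : Omega -> R).
Hypothesis hZ : forall B : set R, measurable B ->
  P (Z @^-1` B) = lebesgue_measure (B `&` `[0, 1]%classic).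

Lemma pr_uniform_ge (c : R) : 0 <= c <= 1 -> pr P (Z @^-1` `[c, +oo[%classic) = 1 - c.
Proof.
move=> /andP[c0 c1]; rewrite /pr hZ//.
rewrite (_ : _ `&` _ = `[c, 1]%classic); last first.
  apply/seteqP; split => x /=; rewrite !in_itv /= ?andbT.
    by move=> [cx /andP[_ ->]]; rewrite cx.
  by move=> /andP[cx x1]; rewrite x1 (le_trans c0 cx).
by rewrite lebesgue_measure_itv /= lte_fin; case: ltP => //=; lra.
Qed.

Lemma pr_uniform_co (c : R) : 0 <= c <= 1 -> pr P (Z @^-1` `[c, 1[%classic) = 1 - c.
Proof.
move=> /andP[c0 c1]; rewrite /pr hZ//.
rewrite (_ : _ `&` _ = `[c, 1[%classic); last first.
  apply/seteqP; split => x /=; rewrite !in_itv /=; first by case.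
  by move=> /andP[cx x1]; rewrite cx x1 (le_trans c0 cx) (ltW x1).
by rewrite lebesgue_measure_itv /= lte_fin; case: ltP => //=; lra.
Qed.

Lemma pr_uniform_range : pr P (Z @^-1` `[0, 1[%classic) = 1.
Proof. by rewrite pr_uniform_co ?subr0// lexx ler01. Qed.

End uniform_thresholds.

Section example.
Context {d : measure_display} {Omega : measurableType d} {R : realType}.
Variables (P : probability Omega R) (I Z1 Z2 : Omega -> R).
Hypotheses (cP : measure_is_complete P) (mI : measurable_fun setT I)
  (mZ1 : measurable_fun setT Z1) (mZ2 : measurable_fun setT Z2)
  (hI1 : P (I @^-1` [set 1]) = (1 / 2)%:E)
  (hZ1 : forall B : set R, measurable B ->
     P (Z1 @^-1` B) = lebesgue_measure (B `&` `[0, 1]%classic))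
  (hZ2 : forall B : set R, measurable B ->
     P (Z2 @^-1` B) = lebesgue_measure (B `&` `[0, 1]%classic))
  (hind : forall A B C : set R, measurable A -> measurable B -> measurable C ->
     P (I @^-1` A `&` Z1 @^-1` B `&` Z2 @^-1` C)
     = (P (I @^-1` A) * P (Z1 @^-1` B) * P (Z2 @^-1` C))%E).

Let I1 := I @^-1` [set 1].
Let mI1 : measurable I1. Proof. exact: preimage_measurable. Qed.
Let prI1 : pr P I1 = 1 / 2. Proof. by rewrite /pr /I1 hI1. Qed.
Let prNI1 : pr P (~` I1) = 1 / 2. Proof. by rewrite prC// prI1; lra. Qed.

Let U1 := Z1 @^-1` `[0, 1[%classic.
Let mU1 : measurable U1. Proof. exact: preimage_measurable. Qed.
Let prU1 : pr P U1 = 1. Proof. exact: pr_uniform_range. Qed.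
Let U2 := Z2 @^-1` `[0, 1[%classic.
Let mU2 : measurable U2. Proof. exact: preimage_measurable. Qed.
Let prU2 : pr P U2 = 1. Proof. exact: pr_uniform_range. Qed.

Let U_range (Z : Omega -> R) w : (Z @^-1` `[0, 1[%classic) w -> 0 <= Z w < 1.
Proof. by rewrite /= in_itv. Qed.

Let uninformed_at (a : R) : 0 < a <= 1 -> in_A0 (F2 P) (fun t (_ : Omega) => step a t).
Proof.
move=> a01; apply: (@A0_step _ _ _ _ (fun _ => a)) => // t _ B _.
apply: augmented_self; have [Ba|nBa] := pselect (B (step a t)).
  by right; apply/seteqP; split.
by left; apply/seteqP; split.
Qed.

Section informed_strategy.
(* Against any strategy of the informed player, the uninformed player can
   secure at least 3/5: either the informed player stops before 1 with
   probability at most 2/5, and waiting until 1 earns the terminal payoff 2 on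
   {I = 1}, or the informed player stops early with larger probability, and
   stopping at a time s_n close to 1 collects 1 from these early stops and
   about 1/2 otherwise. *)
Variable rho : R -> Omega -> R.
Hypothesis A0rho : in_A0 (F1 P I) rho.

(* the events {rho_{s_n} > Z1}, increasing to {tau < 1} for tau = rst rho Z1 *)
Let An n := [set w | Z1 w < rho (sn n) w].
Let A := \bigcup_n An n.

Let mAn n : measurable (An n).
Proof.
have mrho t : 0 <= t <= 1 -> measurable_fun setT (rho t).
  by apply: A0_measurable cP _ A0rho => C; exact: generators_F1_measurable.
exact: measurable_lt mZ1 (mrho _ (sn01 n)).
Qed.

Let mA : measurable A. Proof. exact: bigcupT_measurable. Qed.

Let stop_by_sn n w : An n w -> rst rho Z1 w <= sn n.
Proof. exact: rst_le (sn01 n). Qed.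

Let stop_before1 w : A w -> rst rho Z1 w < 1.
Proof. by case=> n _ /stop_by_sn /le_lt_trans; apply; exact: sn_lt1. Qed.

Let stop_at1 w : ~ A w -> U1 w -> rst rho Z1 w = 1.
Proof.
move=> nAw /U_range/andP[_ Z1w]; apply: rst_eq1 A0rho Z1w _ => n.
by rewrite leNgt; apply/negP => Anw; apply: nAw; exists n.
Qed.

Let An_nondecreasing : nondecreasing_seq An.
Proof.
move=> m n mn; apply/subsetPset => w /= /lt_le_trans; apply.
by apply: A0_mono A0rho (sn_ge0 _) (sn_le mn) (ltW (sn_lt1 _)).
Qed.

(* If early stops are unlikely, the uninformed player waits until time 1:
   the payoff is 1 on {tau < 1} and 2 on {tau = 1, I = 1}. *)
Lemma reply_wait : pr P A <= 2 / 5 ->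
  ((3 / 5)%:E <= Ngame P I Z1 Z2 rho (fun t _ => step 1 t))%E.
Proof.
move=> pA; pose B := ~` A `&` U1 `&` I1.
have mB : measurable B by apply: measurableI => //; apply: measurableI => //; exact: measurableC.
have pB : 1 / 2 - pr P A <= pr P B.
  have := pr_le_setI P (measurableI _ _ (measurableC mA) mU1) mI1.
  by rewrite (pr_setI_as (measurableC mA) mU1 prU1) prNI1 prC//; lra.
apply: le_trans (integral_ge_comb2 P ler01 (ler0n _ 2) (measurableI _ _ mA mU2)
  (measurableI _ _ mB mU2) _).
  by rewrite lee_fin (pr_setI_as mA mU2 prU2) (pr_setI_as mB mU2 prU2); lra.
move=> w; rewrite /comb2.
have [U2w|nU2w] := pselect (U2 w); last first.
  by rewrite !indic_out ?mulr0 ?addr0 ?payoff_ge0 ?rst_ge0//; case.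
rewrite rst_step ?ltr01 ?lexx ?U_range//.
have [Aw|nAw] := pselect (A w).
  by rewrite indic_in// indic_out ?mulr0 ?addr0 ?mulr1 ?payoff_lt ?stop_before1//; case=> -[[]].
rewrite indic_out ?mulr0 ?add0r; last by case.
have [[[_ U1w] I1w]|nBw] := pselect (B w); last first.
  by rewrite indic_out ?mulr0 ?payoff_ge0 ?ler01//; case.
by rewrite indic_in// stop_at1// payoff_diag /h_pay ltxx I1w eqxx mulr1.
Qed.

(* If early stops are likely, the uninformed player stops at a time s_n >= 9/10
   by which they are likely already: the payoff is 1 when the informed player
   has stopped by s_n, and s_n / 2 >= 9/20 otherwise. *)
Lemma reply_early n : (9 <= n)%N -> 7 / 20 < pr P (An n) ->
  ((3 / 5)%:E <= Ngame P I Z1 Z2 rho (fun t _ => step (sn n) t))%E.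
Proof.
move=> n9 pAn; have sn9 : 9 / 10 <= sn n :> R := sn_ge9 n9.
have sn1 : sn n < 1 :> R := sn_lt1 n.
have [c0 c1] : 0 <= 9 / 20 :> R /\ 0 <= 11 / 20 :> R by split; lra.
apply: le_trans (integral_ge_comb2 P c0 c1 mU2 (measurableI _ _ (mAn n) mU2) _).
  by rewrite lee_fin (pr_setI_as (mAn n) mU2 prU2) prU2; lra.
move=> w; rewrite /comb2.
have [U2w|nU2w] := pselect (U2 w); last first.
  by rewrite !indic_out ?mulr0 ?addr0 ?payoff_ge0 ?rst_ge0//; case.
rewrite indic_in// rst_step ?U_range//; last by rewrite (ltW sn1) andbT; lra.
have [Anw|nAnw] := pselect (An n w).
  by rewrite indic_in// payoff_first ?stop_by_sn//; [lra | exact: le_lt_trans (stop_by_sn Anw) sn1].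
rewrite indic_out; last by case.
have [tau_le|sn_lt] := leP (rst rho Z1 w) (sn n).
  by rewrite payoff_first//; [lra | exact: le_lt_trans tau_le sn1].
by rewrite payoff_gt//; lra.
Qed.

(* By continuity from below, if {tau < 1} has probability above 2/5 then so
   has some {rho_{s_n} > Z1} with n >= 9 (with room to spare). *)
Lemma early_stop_likely : 2 / 5 < pr P A ->
  exists n, (9 <= n)%N /\ 7 / 20 < pr P (An n).
Proof.
move=> pA; apply: contrapT => small.
have cvgA : (P \o An) x @[x --> \oo] --> P A :=
  nondecreasing_cvg_mu mAn mA An_nondecreasing.
suff : (P A <= (7 / 20)%:E)%E by rewrite prE// lee_fin; lra.
rewrite -(cvg_lim _ cvgA)//; apply: lime_le; first by apply/cvg_ex; exists (P A).
exists 9%N => // k /= k9; rewrite prE// lee_fin leNgt; apply/negP => pk.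
by apply: small; exists k.
Qed.

Lemma informed_strategy_exploitable :
  ((3 / 5)%:E <= ereal_sup [set Ngame P I Z1 Z2 rho xi | xi in in_A0 (F2 P)])%E.
Proof.
have [pA|pA] := leP (pr P A) (2 / 5).
  apply: le_trans (reply_wait pA) _; apply: ereal_sup_ubound.
  by exists (fun t _ => step 1 t) => //; apply: uninformed_at; rewrite ltr01 lexx.
have [n [n9 pAn]] := early_stop_likely pA.
apply: le_trans (reply_early n9 pAn) _; apply: ereal_sup_ubound.
exists (fun t _ => step (sn n) t) => //; apply: uninformed_at.
by rewrite (lt_le_trans _ (sn_ge9 n9)) ?(ltW (sn_lt1 n)); lra.
Qed.

End informed_strategy.

Let informed_at (s : R) : 0 < s <= 1 ->
  in_A0 (F1 P I) (fun t w => step (if I w == 1 then s else 1) t).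
Proof.
move=> s01; apply: A0_step => [t _ B mB|w]; last by case: ifP; rewrite ?ltr01 ?lexx.
apply: augmented_self.
exists ([set 1] `&` [set _ | B (step s t)] `|` ~` [set 1] `&` [set _ | B (step 1 t)]).
  by apply: measurableU; apply: measurableI; try exact: measurable_cst_prop;
    try apply: measurableC; exact: measurable_set1.
apply/seteqP; split => w /=; first by move=> [[-> Bs]|[/eqP/negbTE ->]]; rewrite ?eqxx.
by case: ifPn => [/eqP|/eqP] Iw Bw; [left|right].
Qed.

Let pr_indep (A C : set R) : measurable A -> measurable C ->
  pr P (I @^-1` A `&` Z2 @^-1` C) = pr P (I @^-1` A) * pr P (Z2 @^-1` C).
Proof.
move=> mA mC; have := hind mA measurableT mC.
rewrite preimage_setT setIT probability_setT mule1.
rewrite (prE P (preimage_measurable mI mA)) (prE P (preimage_measurable mZ2 mC)).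
by rewrite -EFinM /pr => ->.
Qed.

Section uninformed_strategy.
(* Against any strategy xi of the uninformed player, the informed player can
   push the payoff down to 1/2 + e.  As xi is adapted to the augmented trivial
   filtration, each xi_{s_k} is almost surely a constant c_k; let L = sup c_k
   and c_j > L - e.  On {I = 1} the informed player stops at s = s_{j+1},
   which pays at most 1/2 unless Z2 >= c_j; on {I = 2} he waits until 1, which
   pays at most 1/2 and pays 0 when Z2 >= L. *)
Variable xi : R -> Omega -> R.
Hypothesis A0xi : in_A0 (F2 P) xi.
Variable c : nat -> R.
Hypotheses (c01 : forall k, 0 <= c k <= 1)
  (xi_c : forall k, P.-negligible [set w | xi (sn k) w != c k]).

Let L := sup (range c).

Let c_le_L k : c k <= L.
Proof. by apply: sup_upper_bound; [exact: has_sup_range01 | exists k]. Qed.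

Let L01 : 0 <= L <= 1.
Proof.
rewrite (le_trans _ (c_le_L 0%N)); last by case/andP: (c01 0%N).
by apply: ge_sup; [exists (c 0%N), 0%N | move=> _ [k _ <-]; case/andP: (c01 k)].
Qed.

Variable j : nat.
Let s : R := sn j.+1.
Let rho := fun t w => step (if I w == 1 then s else 1) t.

Let Bad := ~` U1 `|` ~` U2 `|` \bigcup_k [set w | xi (sn k) w != c k].

Let Bad_negligible : P.-negligible Bad.
Proof.
by apply: negligibleU; [apply: negligibleU; exact: negligible_compl|exact: negligible_bigcup].
Qed.

Let xi_at_sn w k : ~ Bad w -> xi (sn k) w = c k.
Proof. by move=> nBw; apply: contrapT => /eqP ne; apply: nBw; right; exists k. Qed.

Let sigma_early w : ~ Bad w -> Z2 w < c j -> rst xi Z2 w < s.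
Proof.
move=> nBw Zc; apply: le_lt_trans (sn_ltS j); apply: rst_le; first exact: sn01.
by rewrite xi_at_sn.
Qed.

Let sigma_late w : ~ Bad w -> L <= Z2 w -> rst xi Z2 w = 1.
Proof.
move=> nBw LZ; have /U_range/andP[_ Z21] : U2 w by apply: contrapT => ?; apply: nBw; left; right.
by apply: rst_eq1 A0xi Z21 _ => k; rewrite xi_at_sn// (le_trans (c_le_L k)).
Qed.

Let rho_stop w : ~ Bad w -> rst rho Z1 w = if I w == 1 then s else 1.
Proof.
move=> nBw; rewrite /rho rst_step//; first by case: ifP => _; rewrite /s ?sn_S_gt0 ?ltr01 /= ?lexx ?(ltW (sn_lt1 _)).
by apply: U_range; apply: contrapT => ?; apply: nBw; left; left.
Qed.

Let payoff_bound w : ~ Bad w ->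
  payoff I (rst rho Z1 w) (rst xi Z2 w) w <=
  comb2 (1 / 2) (1 / 2) (~` (~` I1 `&` Z2 @^-1` `[L, 1[%classic))
                        (I1 `&` Z2 @^-1` `[c j, +oo[%classic) w.
Proof.
move=> nBw; rewrite /comb2 rho_stop//.
have sig1 := rst_le1 xi Z2 w; have sig0 := rst_ge0 xi Z2 w.
have [Iw|Iw] := eqVneq (I w) 1.
  rewrite indic_in; last by case=> /(_ Iw).
  have [cZ|Zc] := leP (c j) (Z2 w).
    rewrite indic_in; last by split; rewrite /= ?in_itv /= ?cZ.
    have [sig_ge|sig_lt] := leP s (rst xi Z2 w).
      by rewrite payoff_first ?sn_lt1//; lra.
    by rewrite payoff_gt//; lra.
  rewrite indic_out; last by case=> _ /=; rewrite in_itv /= leNgt Zc.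
  by rewrite payoff_gt ?sigma_early//; lra.
rewrite [X in _ + _ * X]indic_out; last by case=> /eqP; rewrite (negbTE Iw).
have [LZ|ZL] := leP L (Z2 w).
  rewrite sigma_late// payoff_diag /h_pay ltxx (negbTE Iw).
  by rewrite mulr0 addr0 mulr_ge0 ?indic_ge0.
rewrite indic_in; last by case=> _ /=; rewrite in_itv /= leNgt ZL.
have [sig_lt|sig_eq] := ltP (rst xi Z2 w) 1.
  by rewrite payoff_gt//; lra.
have -> : rst xi Z2 w = 1 by apply/le_anti; rewrite sig1.
by rewrite payoff_diag /h_pay ltxx (negbTE Iw); lra.
Qed.

Lemma informed_reply_value :
  (Ngame P I Z1 Z2 rho xi <= (1 / 2 + (L - c j) / 4)%:E)%E.
Proof.
have mCp : measurable (Z2 @^-1` `[L, 1[%classic) by exact: preimage_measurable.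
have mBp : measurable (Z2 @^-1` `[c j, +oo[%classic) by exact: preimage_measurable.
have [h0 h1] : 0 <= 1 / 2 :> R /\ 0 <= 2 :> R by split; lra.
apply: le_trans (integral_le_comb2_ae h0 h0 h1 _ _ Bad_negligible _ _ payoff_bound) _.
- by apply: measurableC; apply: measurableI => //; exact: measurableC.
- exact: measurableI.
- by move=> w; apply: payoff_ge0; exact: rst_ge0.
- by move=> w; apply: payoff_le2; exact: rst_le1.
have indepC : pr P (~` I1 `&` Z2 @^-1` `[L, 1[%classic) = pr P (~` I1) * (1 - L).
  rewrite -(pr_uniform_co hZ2 L01).
  exact: pr_indep (measurableC (measurable_set1 1)) (measurable_itv _).
have indepB : pr P (I1 `&` Z2 @^-1` `[c j, +oo[%classic) = pr P I1 * (1 - c j).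
  rewrite -(pr_uniform_ge hZ2 (c01 j)).
  exact: pr_indep (measurable_set1 1) (measurable_itv _).
rewrite prC; last by apply: measurableI => //; exact: measurableC.
by rewrite indepC indepB prI1 prNI1 lee_fin; lra.
Qed.

End uninformed_strategy.

Lemma uninformed_strategy_exploitable xi : in_A0 (F2 P) xi ->
  (ereal_inf [set Ngame P I Z1 Z2 rho xi | rho in in_A0 (F1 P I)] <= (1 / 2)%:E)%E.
Proof.
move=> A0xi.
have /choice[c /all_and2[c01 xi_c]] : forall k, exists c : R,
    0 <= c <= 1 /\ P.-negligible [set w | xi (sn k) w != c].
  move=> k; have t01 : 0 <= (sn k : R) <= 1 := sn01 k.
  have mxi : measurable_fun setT (xi (sn k)).
    by apply: A0_measurable cP _ A0xi t01 => C; exact: generators_F2_measurable.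
  have [c' ? ?] := F2_as_constant mxi (A0xi.1 _ t01) (fun w => A0_range w A0xi t01).
  by exists c'.
apply/lee_addgt0Pr => e e0.
have [_ [j _ <-] Lcj] := sup_adherent e0 (has_sup_range01 c01).
apply: ge_ereal_inf; exists (Ngame P I Z1 Z2 (fun t w => step (if I w == 1 then sn j.+1 else 1) t) xi).
  by exists (fun t w => step (if I w == 1 then sn j.+1 else 1) t) => //; apply: informed_at;
    rewrite sn_S_gt0 ltW ?sn_lt1.
apply: le_trans (informed_reply_value A0xi c01 xi_c j) _.
by rewrite lee_fin; lra.
Qed.

End example.

Theorem mainTheorem19 (d : measure_display) (Omega : measurableType d)
  (R : realType) (P : probability Omega R) (I Z1 Z2 : Omega -> R) :
  measure_is_complete P ->
  measurable_fun setT I -> measurable_fun setT Z1 -> measurable_fun setT Z2 ->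
  P (I @^-1` [set 1]) = (1 / 2)%:E ->
  P (I @^-1` [set 2]) = (1 / 2)%:E ->
  (forall B : set R, measurable B ->
     P (Z1 @^-1` B) = lebesgue_measure (B `&` `[0, 1]%classic)) ->
  (forall B : set R, measurable B ->
     P (Z2 @^-1` B) = lebesgue_measure (B `&` `[0, 1]%classic)) ->
  (* I, Z1, Z2 mutually independent *)
  (forall A B C : set R, measurable A -> measurable B -> measurable C ->
     P (I @^-1` A `&` Z1 @^-1` B `&` Z2 @^-1` C)
     = (P (I @^-1` A) * P (Z1 @^-1` B) * P (Z2 @^-1` C))%E) ->
  (ereal_sup [set ereal_inf [set Ngame P I Z1 Z2 rho xi | rho in in_A0 (F1 P I)]
             | xi in in_A0 (F2 P)] <= (1 / 2)%:E)%E /\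
  ((1 / 2)%:E < ereal_inf [set ereal_sup [set Ngame P I Z1 Z2 rho xi
                                         | xi in in_A0 (F2 P)]
                          | rho in in_A0 (F1 P I)])%E.
Proof.
move=> cP mI mZ1 mZ2 hI1 _ hZ1 hZ2 hind; split.
  apply: ge_ereal_sup => _ [xi A0xi <-].
  exact: uninformed_strategy_exploitable.
apply: (@lt_le_trans _ _ (3 / 5)%:E); first by rewrite lte_fin; lra.
apply: le_ereal_inf_tmp => _ [rho A0rho <-].
exact: informed_strategy_exploitable.
Qed.
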